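(* Let $N\ge2$, $n\ge1$, $\tilde J>0$ and $J_i=\tilde J/N^i$ for $1\le i\le n$, and let $0\le m\le n-1$, $1\le s\le N$ be integers. Then the sequence $\{\mathcal H(h^{(m,s)};\gamma_i)\}_{i=0}^{sN^m}$ is symmetric, i.e. $$\mathcal H\big(h^{(m,s)};\gamma_K\big)=\mathcal H\big(h^{(m,s)};\gamma_{sN^m-K}\big)\qquad\text{for all }0\le K\le sN^m.$$
   Context: Hierarchical lattice $\Lambda_N^n=\{1,\dots,N^n\}$; $k$-blocks are $\{jN^k+1,\dots,(j+1)N^k\}$; $d(a,b)$ is the smallest $k\ge0$ with $a,b$ in a common $k$-block. For a field $h$, $\mathcal H(h;\sigma)=-\frac12\sum_{\{v,w\},v\ne w}J_{d(v,w)}\sigma(v)\sigma(w)-\frac h2\sum_v\sigma(v)$ (unordered pairs). $\gamma_k$ is the configuration with $+1$ exactly on $\{1,\dots,k\}$ ($0\le k\le N^n$). $h^{(m,s)}=\tilde J\big[(1-\frac1N)(n-m)-(s-1)\frac1N\big]$. *)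

From mathcomp Require Import all_boot all_order all_algebra.
Unset Printing Implicit Defensive.
Import Order.TTheory GRing.Theory Num.Theory.
Local Open Scope ring_scope.

(* Sites of the hierarchical lattice Lambda_N^n = {1,...,N^n} are encoded
   0-indexed as v : 'I_(N^n), site number (v+1).  The k-block
   {jN^k+1,...,(j+1)N^k} becomes {jN^k,...,(j+1)N^k - 1}, so two sites share
   a k-block iff  a %/ N^k == b %/ N^k. *)
Definition same_block (N k a b : nat) : bool := (a %/ N ^ k == b %/ N ^ k)%N.

(* d(a,b): the smallest k >= 0 with a, b in a common k-block.  For sites of
   Lambda_N^n, k = n always works, so searching k in 0..n is exhaustive. *)
Definition hdist (N n a b : nat) : nat :=
  find (fun k => same_block N k a b) (iota 0 n.+1).

Definition Jc {R : realFieldType} (Jt : R) (N i : nat) : R := Jt / (N%:R ^+ i).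

(* Hamiltonian H(h; sigma) = -1/2 sum_{unordered pairs {v,w}, v<>w}
   J_{d(v,w)} sigma(v) sigma(w) - h/2 sum_v sigma(v). Unordered pairs are
   enumerated as v < w. *)
Definition Ham {R : realFieldType} (N n : nat) (Jt h : R)
    (sigma : 'I_(N ^ n) -> R) : R :=
  - (1 / 2) * (\sum_(v : 'I_(N ^ n)) \sum_(w : 'I_(N ^ n) | (v < w)%N)
                 Jc Jt N (hdist N n v w) * sigma v * sigma w)
  - h / 2 * (\sum_(v : 'I_(N ^ n)) sigma v).

(* gamma_k: +1 exactly on sites {1,...,k} (0-indexed: v < k), -1 elsewhere. *)
Definition gamma {R : realFieldType} (N n k : nat) : 'I_(N ^ n) -> R :=
  fun v => if (v < k)%N then 1 else -1.

Definition hms {R : realFieldType} (Jt : R) (N n m s : nat) : R :=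
  Jt * ((1 - 1 / N%:R) * (n%:R - m%:R) - (s%:R - 1) / N%:R).

From mathcomp Require Import all_boot all_order all_algebra.
From mathcomp Require Import zify ring lra.
Import Order.TTheory GRing.Theory Num.Theory.

(* Going from gamma_k to gamma_(k+1) flips site k, which changes the energy by
   B_k - A_k - h, where A_k and B_k are the total couplings of site k to the
   sites before and after it.  Grouping the sites into blocks shows that
   A_k = (Jt/N) * (sum of the n base-N digits of k), and reflecting the lattice
   gives B_k = A_(N^n-1-k).  The digit sums of k and s N^m - 1 - k always add
   up to m (N-1) + (s-1); h^(m,s) is exactly the field for which the
   increments at k and at s N^m - 1 - k then cancel, so the energies along
   gamma_0, ..., gamma_(s N^m) form a symmetric sequence. *)

Lemma divn_eq_complement d p a : 0 < d -> a < p * d ->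
  p * d - 1 - a = (p - 1 - a %/ d) * d + (d - 1 - a %% d).
Proof.
move=> d_gt0 ltap; have ltr := ltn_pmod a d_gt0.
have : (a %/ d).+1 * d <= p * d by rewrite leq_mul2r ltn_divLR // ltap orbT.
move: (a %/ d) (a %% d) (divn_eq a d) ltr => q r -> ltr.
rewrite !mulnBl mul1n mulSn; lia.
Qed.

Lemma divn_complement d p a : 0 < d -> a < p * d ->
  (p * d - 1 - a) %/ d = p - 1 - a %/ d.
Proof.
move=> d_gt0 ltap; have := ltn_pmod a d_gt0.
by rewrite divn_eq_complement // divnMDl // (@divn_small (d - 1 - _)) ?addn0 //; lia.
Qed.

Lemma modn_complement d p a : 0 < d -> a < p * d ->
  (p * d - 1 - a) %% d = d - 1 - a %% d.
Proof.
move=> d_gt0 ltap; have := ltn_pmod a d_gt0.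
by rewrite divn_eq_complement // modnMDl (@modn_small (d - 1 - _)) //; lia.
Qed.

Fixpoint digit_sum (N n k : nat) : nat :=
  if n is n'.+1 then k %% N + digit_sum N n' (k %/ N) else 0.

Lemma digit_sum0 N n : digit_sum N n 0 = 0.
Proof. by elim: n => //= n IH; rewrite mod0n div0n IH. Qed.

Lemma digit_sum_small N n k : 0 < n -> k < N -> digit_sum N n k = k.
Proof.
by case: n => // n _ ltkN /=; rewrite modn_small // divn_small // digit_sum0 addn0.
Qed.

Lemma digit_sum_complement N n m s k : 0 < N -> m < n -> 0 < s <= N ->
  k < s * N ^ m ->
  digit_sum N n k + digit_sum N n (s * N ^ m - 1 - k) = m * (N - 1) + (s - 1).
Proof.
move=> N_gt0; elim: m n k => [|m IH] [|n] k // ltmn rng_s ltk.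
  by rewrite expn0 muln1 in ltk *; rewrite !digit_sum_small //; lia.
have ltq : k %/ N < s * N ^ m by rewrite ltn_divLR // -mulnA -expnSr.
rewrite expnSr mulnA in ltk *.
rewrite /= modn_complement // divn_complement // -addnACA IH //.
by have := ltn_pmod k N_gt0; lia.
Qed.

Lemma digit_sum_complement_full N n k : 0 < N -> k < N ^ n ->
  digit_sum N n k + digit_sum N n (N ^ n - 1 - k) = n * (N - 1).
Proof.
case: n => [|n] N_gt0 ltk; first by move: ltk; rewrite expn0 ltnS leqn0 => /eqP ->.
rewrite expnS in ltk *; rewrite digit_sum_complement ?N_gt0 ?leqnn // mulSn; lia.
Qed.

Lemma hdist_sym N n a b : hdist N n a b = hdist N n b a.
Proof. by apply: eq_find => k; rewrite /same_block eq_sym. Qed.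

Lemma hdist_complement N n a b : 0 < N -> a < N ^ n -> b < N ^ n ->
  hdist N n (N ^ n - 1 - a) (N ^ n - 1 - b) = hdist N n a b.
Proof.
move=> N_gt0 lta ltb; apply: eq_in_find => k; rewrite mem_iota add0n ltnS.
move=> /andP[_ lekn]; rewrite /same_block.
have powE : N ^ n = N ^ (n - k) * N ^ k by rewrite -expnD subnK.
have pow_gt0 : 0 < N ^ k by rewrite expn_gt0 N_gt0.
rewrite powE in lta ltb *; rewrite !divn_complement //.
have := lta; have := ltb; rewrite -!ltn_divLR // => ltb' lta'.
by apply/eqP/eqP; lia.
Qed.

Lemma hdist_succ N n a b : a %/ N != b %/ N ->
  hdist N n.+1 a b = (hdist N n (a %/ N) (b %/ N)).+1.
Proof.
move=> neq_ab.
have find_cons (p : pred nat) x r :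
  find p (x :: r) = if p x then 0 else (find p r).+1 by [].
rewrite /hdist -[iota 0 n.+2]/(0 :: iota (1 + 0) n.+1) (iotaDl 1 0) find_cons.
rewrite {1}/same_block expn0 !divn1 ifN_eq; last by apply: contraNneq neq_ab => ->.
rewrite find_map; congr _.+1; apply: eq_find => j.
by rewrite /same_block /= add1n expnS !divnMA.
Qed.

Lemma hdist_sibling N n a b : a != b -> a %/ N = b %/ N -> hdist N n.+1 a b = 1.
Proof.
move=> neq_ab eq_q; rewrite /hdist /= /same_block expn0 !divn1 (negbTE neq_ab).
by rewrite expn1 eq_q eqxx.
Qed.

Local Open Scope ring_scope.

Lemma sym_of_antisym_increments (R : realDomainType) (f : nat -> R) L :
  (forall k, (k < L)%N -> f k.+1 - f k = f (L - k.+1)%N - f (L - k)%N) ->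
  forall K, (K <= L)%N -> f K = f (L - K)%N.
Proof.
move=> antisym.
have shift K : (K <= L)%N -> f K - f 0%N = f (L - K)%N - f L.
  elim: K => [|K IH] leKL; first by rewrite subn0 !subrr.
  have := antisym K leKL; have := IH (ltnW leKL); lra.
have := shift L (leqnn L); rewrite subnn => endsE K /shift; lra.
Qed.

Lemma sum_divn (V : nmodType) N q (F : nat -> V) : (0 < N)%N ->
  \sum_(0 <= v < q * N) F (v %/ N)%N = (\sum_(0 <= u < q) F u) *+ N.
Proof.
move=> N_gt0; elim: q => [|q IH]; first by rewrite mul0n !big_geq ?mul0rn.
rewrite mulSnr big_nat_recr //= mulrnDl -IH (big_cat_nat _ (leq_addr _ _)) //=.
congr (_ + _); rewrite -{1}(add0n (q * N)%N) big_addn addKn.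
rewrite -[in RHS](subn0 N) -sumr_const_nat.
by apply: eq_big_nat => i /andP[_ ltiN]; rewrite addnC divnMDl // divn_small ?addn0.
Qed.

Section Couplings.

Context {R : realFieldType} (Jt : R) (N : nat).
Hypothesis N_gt0 : (0 < N)%N.

Definition coupling_below n k := \sum_(0 <= v < k) Jc Jt N (hdist N n v k).
Definition coupling_above n k := \sum_(k.+1 <= w < N ^ n) Jc Jt N (hdist N n k w).

Lemma Jc_succ i : Jc Jt N i.+1 = Jc Jt N i / N%:R.
Proof. by rewrite /Jc exprSr invfM mulrA. Qed.

Lemma coupling_below_succ n k :
  coupling_below n.+1 k = coupling_below n (k %/ N)%N + (k %% N)%:R * (Jt / N%:R).
Proof.
have N_neq0 : N%:R != 0 :> R by rewrite pnatr_eq0 -lt0n.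
set q := (k %/ N)%N; have kE := divn_eq k N.
rewrite /coupling_below (big_cat_nat _ (n := (q * N)%N)) ?leq_divM //=.
congr (_ + _).
  pose G u := Jc Jt N (hdist N n u q) / N%:R.
  rewrite (eq_big_nat _ _ (F2 := fun v => G (v %/ N)%N)).
    by rewrite sum_divn // -mulr_suml -[_ *+ N]mulr_natr mulfVK.
  move=> v /andP[_ ltv]; rewrite hdist_succ ?Jc_succ // ltn_eqF //.
  by rewrite ltn_divLR.
rewrite (eq_big_nat _ _ (F2 := fun _ => Jt / N%:R)).
  by rewrite sumr_const_nat mulr_natl; congr (_ *+ _); rewrite -/q; lia.
move=> v /andP[le_qv ltvk]; rewrite hdist_sibling ?ltn_eqF //.
apply/eqP; rewrite eqn_leq leq_div2r ?(ltnW ltvk) // -/q leq_divRL //.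
Qed.

Lemma coupling_below_digit_sum n k : (k < N ^ n)%N ->
  coupling_below n k = (digit_sum N n k)%:R * (Jt / N%:R).
Proof.
elim: n k => [|n IH] k ltk.
  move: ltk; rewrite expn0 ltnS leqn0 => /eqP ->.
  by rewrite /coupling_below big_geq ?mul0r.
by rewrite coupling_below_succ IH ?ltn_divLR -?expnSr // /= natrD mulrDl addrC.
Qed.

Lemma coupling_above_complement n k : (k < N ^ n)%N ->
  coupling_above n k = coupling_below n (N ^ n - 1 - k)%N.
Proof.
move=> ltk; rewrite /coupling_above /coupling_below.
set G := fun v => Jc Jt N (hdist N n v (N ^ n - 1 - k)%N).
rewrite (eq_big_nat _ _ (F2 := fun w => G (N ^ n - 1 - w)%N)); last first.
  by move=> w /andP[_ ltw]; rewrite /G hdist_sym hdist_complement.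
rewrite -{1}(add0n k.+1) big_addn big_nat_rev /=.
have -> : (N ^ n - k.+1 = N ^ n - 1 - k)%N by lia.
by apply: eq_big_nat => i /andP[_ lti]; congr G; lia.
Qed.

End Couplings.

Section SpinFlip.

Context {R : comPzRingType}.

Definition gamma_nat (k v : nat) : R := if (v < k)%N then 1 else -1.

Definition pair_energy (c : nat -> nat -> R) M (sigma : nat -> R) :=
  \sum_(0 <= v < M) \sum_(0 <= w < M | (v < w)%N) c v w * sigma v * sigma w.

Lemma gamma_nat_succ_sub k v :
  gamma_nat k.+1 v - gamma_nat k v = if v == k then 2 else 0.
Proof. by rewrite /gamma_nat ltnS; case: ltngtP => //= _; rewrite ?subrr ?opprK. Qed.

Lemma gamma_nat_succ_mul_sub k v w : (v < w)%N ->
  gamma_nat k.+1 v * gamma_nat k.+1 w - gamma_nat k v * gamma_nat k w =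
  (if v == k then -2 else 0) + (if w == k then 2 else 0).
Proof.
rewrite /gamma_nat !ltnS => ltvw.
by case: (ltngtP v k) => [ltv|gtv|eqv]; case: (ltngtP w k) => [ltw|gtw|eqw];
  rewrite ?eqxx /=; try lia; ring.
Qed.

Lemma sum_gamma_nat_succ_sub M k : (k < M)%N ->
  \sum_(0 <= v < M) gamma_nat k.+1 v - \sum_(0 <= v < M) gamma_nat k v = 2.
Proof.
move=> ltk; rewrite -sumrB (eq_bigr _ (fun v _ => gamma_nat_succ_sub k v)).
by rewrite -big_mkcond big_nat1_eq ltk.
Qed.

Lemma pair_energy_flip c M k : (k < M)%N ->
  pair_energy c M (gamma_nat k.+1) - pair_energy c M (gamma_nat k) =
  2 * (\sum_(0 <= v < k) c v k - \sum_(k.+1 <= w < M) c k w).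
Proof.
move=> ltk; rewrite /pair_energy -sumrB.
under eq_bigr => v _.
  rewrite -sumrB; under eq_bigr => w ltvw.
    rewrite -!mulrA -mulrBr gamma_nat_succ_mul_sub // mulrDr.
    rewrite !(fun_if (GRing.mul (c v w))) mulr0.
  over.
  rewrite big_split /=; over.
rewrite big_split /=.
have row : \sum_(0 <= v < M) \sum_(0 <= w < M | (v < w)%N)
    (if v == k then c v w * -2 else 0) = - (2 * \sum_(k.+1 <= w < M) c k w).
  pose row_k := \sum_(0 <= w < M | (k < w)%N) c k w * -2.
  rewrite (eq_bigr (fun v => if v == k then row_k else 0)).
    rewrite -big_mkcond big_nat1_eq leq0n ltk /row_k -mulr_suml mulrN mulrC.
    by rewrite [in RHS](big_nat_widenl _ 0).
  by move=> v _; case: eqVneq => [->|_]; rewrite ?big1_eq.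
have col : \sum_(0 <= v < M) \sum_(0 <= w < M | (v < w)%N)
    (if w == k then c v w * 2 else 0) = 2 * \sum_(0 <= v < k) c v k.
  under eq_bigr do rewrite -big_mkcondr big_nat1_cond_eq leq0n ltk /=.
  rewrite -big_mkcond [in RHS](big_nat_widen _ _ M) ?(ltnW ltk) // mulr_sumr.
  by apply: eq_big => // v _; rewrite mulrC.
by rewrite row col mulrBr addrC.
Qed.

End SpinFlip.

Lemma Ham_gammaE (R : realFieldType) N n (Jt h : R) k :
  Ham N n Jt h (gamma N n k) =
  - (1 / 2) * pair_energy (fun v w => Jc Jt N (hdist N n v w)) (N ^ n) (gamma_nat k)
  - h / 2 * \sum_(0 <= v < N ^ n) gamma_nat k v.
Proof.
rewrite /Ham /pair_energy !big_mkord; congr (_ * _ - _).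
by apply: eq_bigr => v _; rewrite big_mkord.
Qed.

Lemma Ham_gamma_succ (R : realFieldType) N n (Jt h : R) k : (k < N ^ n)%N ->
  Ham N n Jt h (gamma N n k.+1) - Ham N n Jt h (gamma N n k) =
  coupling_above Jt N n k - coupling_below Jt N n k - h.
Proof.
move=> ltk; rewrite !Ham_gammaE.
move/eqP: (pair_energy_flip (fun v w => Jc Jt N (hdist N n v w)) _ _ ltk).
rewrite subr_eq => /eqP ->.
move/eqP: (@sum_gamma_nat_succ_sub R _ _ ltk); rewrite subr_eq => /eqP ->.
by rewrite /coupling_above /coupling_below; field.
Qed.

Lemma Ham_gamma_succ_digit_sum (R : realFieldType) N n (Jt h : R) k :
  (0 < N)%N -> (k < N ^ n)%N ->
  Ham N n Jt h (gamma N n k.+1) - Ham N n Jt h (gamma N n k) =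
  ((n * (N - 1))%:R - 2 * (digit_sum N n k)%:R) * (Jt / N%:R) - h.
Proof.
move=> N_gt0 ltk; rewrite Ham_gamma_succ // coupling_above_complement //.
rewrite !coupling_below_digit_sum //; last by lia.
by rewrite -(digit_sum_complement_full _ _ _ N_gt0 ltk) natrD; ring.
Qed.

Theorem lemma4p4 (R : realFieldType) (N n : nat) (Jt : R) (m s K : nat) :
  (2 <= N)%N -> (1 <= n)%N -> 0 < Jt ->
  (m <= n - 1)%N -> (1 <= s)%N -> (s <= N)%N ->
  (K <= s * N ^ m)%N ->
  Ham N n Jt (hms Jt N n m s) (@gamma R N n K) =
  Ham N n Jt (hms Jt N n m s) (@gamma R N n (s * N ^ m - K)).
Proof.
move=> N_ge2 n_gt0 _ le_m s_gt0 le_sN le_K.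
have N_gt0 : (0 < N)%N by lia.
have N_neq0 : N%:R != 0 :> R by rewrite pnatr_eq0 -lt0n.
have le_LM : (s * N ^ m <= N ^ n)%N.
  by rewrite (leq_trans (leq_mul le_sN (leqnn _))) // -expnS leq_pexp2l //; lia.
pose f j := Ham N n Jt (hms Jt N n m s) (@gamma R N n j).
apply: (@sym_of_antisym_increments _ f _ _ _ le_K) => k ltk; rewrite /f.
set L := (s * N ^ m)%N in ltk le_LM *.
rewrite -[(L - k)%N](subnSK ltk) -[RHS]opprB !Ham_gamma_succ_digit_sum //; try lia.
have -> : (L - k.+1 = L - 1 - k)%N by lia.
have lt_mn : (m < n)%N by lia.
have rng_s : (0 < s <= N)%N by rewrite s_gt0.
have pair_E := digit_sum_complement _ _ _ _ _ N_gt0 lt_mn rng_s ltk.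
have -> : (digit_sum N n (L - 1 - k))%:R =
          (m * (N - 1) + (s - 1))%:R - (digit_sum N n k)%:R :> R.
  by rewrite -pair_E natrD addrC addKr.
by rewrite /hms !natrD !natrM !natrB //; field.
Qed.
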